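(* Let $K$ be a field, $S=K[x_1,\ldots,x_n]$, and $\alpha=(k_1,\ldots,k_n)\in\mathbb N^n$. A monomial ideal $I\subset S$ is polymatroidal if and only if its expansion $I^\alpha\subset S^\alpha$ is polymatroidal.
   Context: $\mathbb N$ denotes the positive integers. For $\alpha=(k_1,\ldots,k_n)\in\mathbb N^n$ let $S^\alpha=K[x_{ij}:1\le i\le n,\ 1\le j\le k_i]$ and $P_i=(x_{i1},\ldots,x_{ik_i})\subset S^\alpha$. If $I$ is a monomial ideal with minimal monomial generating set $G(I)=\{\mathbf x^{\mathbf a_1},\ldots,\mathbf x^{\mathbf a_r}\}$, $\mathbf x^{\mathbf a}=x_1^{\mathbf a(1)}\cdots x_n^{\mathbf a(n)}$, its expansion is $I^\alpha=\sum_{l=1}^r P_1^{\mathbf a_l(1)}\cdots P_n^{\mathbf a_l(n)}\subset S^\alpha$. A monomial ideal $I$ is polymatroidal if (i) all elements of $G(I)$ have the same degree, and (ii) whenever $u=x_1^{a_1}\cdots x_n^{a_n}$ and $v=x_1^{b_1}\cdots x_n^{b_n}$ belong to $G(I)$ with $a_i>b_i$, there exists $j$ with $a_j<b_j$ such that $x_j(u/x_i)\in G(I)$. (For $I^\alpha$ the same definition is used in the polynomial ring $S^\alpha$.) *)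

(* Monomial ideals are modelled combinatorially by their
   monomials (exponent vectors). *)
From mathcomp Require Import all_boot.
Set Implicit Arguments. Unset Strict Implicit. Unset Printing Implicit Defensive.

Section Monomials.
Variable V : finType.

Definition mon := {ffun V -> nat}.

Definition mon_one : mon := [ffun => 0%N].
Definition mon_mul (u v : mon) : mon := [ffun z => u z + v z].
Definition mon_var (x : V) : mon := [ffun z => (z == x : nat)].
Definition mdvd (u v : mon) : bool := [forall z, u z <= v z].
Definition mdeg (u : mon) : nat := \sum_z u z.
Definition mexch (u : mon) (x y : V) : mon :=
  [ffun z => u z - (z == x) + (z == y)].

(* A monomial ideal is given by a finite list of monomial generators;
   its monomials are those divisible by some generator. *)
Definition monideal := seq mon.
Definition in_mi (I : monideal) (m : mon) : bool := has (fun g => mdvd g m) I.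

Definition mi_sum (I J : monideal) : monideal := I ++ J.
Definition mi_mul (I J : monideal) : monideal :=
  [seq mon_mul u v | u <- I, v <- J].
Definition mi_unit : monideal := [:: mon_one].
Definition mi_pow (I : monideal) (a : nat) : monideal := iter a (mi_mul I) mi_unit.

(* G(I): the minimal monomial generating set = minimal monomials of I *)
Definition minGen (I : monideal) (u : mon) : Prop :=
  in_mi I u /\ forall v, in_mi I v -> mdvd v u -> v = u.

Definition polymatroidal (I : monideal) : Prop :=
  (forall u v, minGen I u -> minGen I v -> mdeg u = mdeg v) /\
  (forall u v (i : V), minGen I u -> minGen I v -> v i < u i ->
     exists j : V, u j < v j /\ minGen I (mexch u i j)).
End Monomials.

(* Expansion. Variables of S^alpha: x_{ij}, 1<=i<=n, 1<=j<=k_i, indexed by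
   the dependent pair (i, j) with j : 'I_(k i). *)
Definition expvar (n : nat) (k : 'I_n -> nat) := {i : 'I_n & 'I_(k i)}.

Definition Pideal (n : nat) (k : 'I_n -> nat) (i : 'I_n) : monideal (expvar k) :=
  [seq mon_var (Tagged (fun i => 'I_(k i)) j) | j <- enum 'I_(k i)].

(* I^alpha = sum_l P_1^{a_l(1)} ... P_n^{a_l(n)} *)
Definition expansion (n : nat) (k : 'I_n -> nat) (I : monideal 'I_n)
  : monideal (expvar k) :=
  flatten [seq foldr (fun i acc => mi_mul (mi_pow (Pideal k i) (a i)) acc)
                     (mi_unit _) (enum 'I_n) | a : mon 'I_n <- I].

From mathcomp Require Import all_boot zify.
Set Implicit Arguments. Unset Strict Implicit. Unset Printing Implicit Defensive.

(* Write [contract w] for the image of a monomial of S^alpha under x_ij |-> x_i.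
   The generators of I^alpha are products of variables from the blocks P_i, so
   w lies in I^alpha exactly when [contract w] lies in I; since [contract] is
   additive and maps divisibility to divisibility, and every divisor of
   [contract w] is the contraction of a divisor of w, the minimal generators of
   I^alpha are precisely the monomials whose contraction is a minimal generator
   of I.  Contraction preserves degrees and turns an exchange x_j (w / x_z) into
   the exchange on the blocks of z and x_j (a trivial one inside a block), which
   transfers the exchange property from I to I^alpha.  Conversely, lifting each
   u into the first variable of its blocks realises G(I) inside G(I^alpha). *)

Section Monomials.
Variable V : finType.
Implicit Types (u v m : mon V) (I : monideal V) (P : pred V) (f g : V -> nat).

Lemma ltn_sum_exists P f g :
  \sum_(z | P z) f z < \sum_(z | P z) g z -> exists2 z, P z & f z < g z.
Proof.
move=> lt_fg; have /existsP[z /andP[]] : [exists z, P z && (f z < g z)].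
  apply: contraLR lt_fg => /existsPn le_gf; rewrite -leqNgt.
  by apply: leq_sum => z Pz; have := le_gf z; rewrite Pz /= -leqNgt.
by exists z.
Qed.

Lemma ltn_sum_at P f g x : P x -> (forall z, P z -> f z <= g z) -> f x < g x ->
  \sum_(z | P z) f z < \sum_(z | P z) g z.
Proof.
move=> Px le_fg lt_x; rewrite (bigD1 x) //= [X in _ < X](bigD1 x) //= -addSn.
by apply: leq_add => //; apply: leq_sum => z /andP[Pz _]; apply: le_fg.
Qed.

Lemma leq_sum_compensate P f g x : P x -> g x < f x ->
  \sum_(z | P z) f z <= \sum_(z | P z) g z -> exists2 z, P z & f z < g z.
Proof.
move=> Px lt_x le_sum; have /existsP[z /andP[]] : [exists z, P z && (f z < g z)].
  apply: contraLR le_sum => /existsPn le_gf; rewrite -ltnNge.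
  by apply: ltn_sum_at Px _ lt_x => z Pz; have := le_gf z; rewrite Pz /= -leqNgt.
by exists z.
Qed.

Lemma leq_sum_witness P f c : c <= \sum_(z | P z) f z ->
  exists g : mon V, (forall z, g z <= f z) /\ \sum_(z | P z) g z = c.
Proof.
elim: c => [|c IHc] lt_c.
  exists (mon_one V); split=> [z|]; first by rewrite ffunE.
  by rewrite big1 // => z; rewrite ffunE.
have [g [le_gf sum_g]] := IHc (ltnW lt_c).
have [x Px lt_x] : exists2 x, P x & g x < f x by apply: ltn_sum_exists; rewrite sum_g.
exists (mon_mul g (mon_var x)); split=> [z|].
  by rewrite !ffunE; case: eqP => [->|_]; rewrite ?addn1 ?addn0.
under eq_bigr do rewrite ffunE.
rewrite big_split /= sum_g (bigD1 x) //= big1 => [|z /andP[_ /negbTE zx]].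
  by rewrite ffunE eqxx addn0 addn1.
by rewrite ffunE zx.
Qed.

Lemma mdvdP u v : reflect (forall z, u z <= v z) (mdvd u v).
Proof. exact: forallP. Qed.

Lemma mdvd_refl u : mdvd u u.
Proof. by apply/mdvdP. Qed.

Lemma mdvd_eq u v : mdvd u v -> mdeg u = mdeg v -> u = v.
Proof.
move=> /mdvdP le_uv eq_sum; apply/ffunP => z; apply/eqP; rewrite eqn_leq le_uv /=.
rewrite leqNgt; apply/negP => lt_z.
have := ltn_sum_at (P := predT) isT (fun x _ => le_uv x) lt_z.
by rewrite -/(mdeg u) -/(mdeg v) eq_sum ltnn.
Qed.

Lemma in_miP I m : reflect (exists2 g, g \in I & mdvd g m) (in_mi I m).
Proof. exact: hasP. Qed.

Lemma in_mi_unit m : in_mi (mi_unit V) m.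
Proof.
by apply/in_miP; exists (mon_one V); rewrite ?inE //; apply/mdvdP => z; rewrite ffunE.
Qed.

Lemma in_mi_mulP I J m :
  in_mi (mi_mul I J) m <->
  exists u v, [/\ in_mi I u, in_mi J v & mdvd (mon_mul u v) m].
Proof.
split=> [/in_miP[_ /allpairsP[[u v] /= [uI vJ ->]] dvd_m] | [u [v []]]].
  by exists u, v; split=> //; apply/in_miP; [exists u | exists v] => //; apply/mdvdP.
move=> /in_miP[g gI /mdvdP le_gu] /in_miP[h hJ /mdvdP le_hv] /mdvdP le_m.
apply/in_miP; exists (mon_mul g h); first by apply/allpairsP; exists (g, h).
apply/mdvdP => z; apply: leq_trans (le_m z); rewrite !ffunE; exact: leq_add.
Qed.

Lemma in_mi_flattenP (T : eqType) (F : T -> monideal V) (s : seq T) m :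
  in_mi (flatten [seq F a | a <- s]) m <-> exists2 a, a \in s & in_mi (F a) m.
Proof.
rewrite /in_mi; split=> [/hasP[g] | [a as_ /hasP[g gF dvd_g]]].
  by move=> /flatten_mapP[a as_ gF] dvd_g; exists a => //; apply/hasP; exists g.
by apply/hasP; exists g => //; apply/flatten_mapP; exists a.
Qed.

Lemma mon_var_factor u x : 0 < u x -> exists u', u = mon_mul (mon_var x) u'.
Proof.
move=> ux_gt0; exists [ffun z => u z - (z == x)]; apply/ffunP => z; rewrite !ffunE.
by case: (z =P x) => [->|_] /=; lia.
Qed.

Lemma mon_mulIr (w : mon V) : injective (fun u => mon_mul u w).
Proof.
move=> u v /ffunP eq_uv; apply/ffunP => z.
by have := eq_uv z; rewrite !ffunE => /addIn.
Qed.

Lemma mexch_mulE u x y : 0 < u x ->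
  mon_mul (mexch u x y) (mon_var x) = mon_mul u (mon_var y).
Proof.
move=> ux_gt0; apply/ffunP => z; rewrite !ffunE.
by case: (z =P x) => [->|_]; case: (_ =P y) => /=; lia.
Qed.

Lemma mexch_id u x : 0 < u x -> mexch u x x = u.
Proof. by move=> /(mexch_mulE x) /mon_mulIr. Qed.

End Monomials.

Section Expansion.
Variables (n : nat) (k : 'I_n -> nat).
Local Notation E := (expvar k).
Implicit Types (u v : mon 'I_n) (w m : mon E) (I : monideal 'I_n).

Definition contract m : mon 'I_n := [ffun i => \sum_(z | tag z == i) m z].

Lemma contractE m i : contract m i = \sum_(z | tag z == i) m z.
Proof. exact: ffunE. Qed.

Lemma contract_mul m w : contract (mon_mul m w) = mon_mul (contract m) (contract w).
Proof.
by apply/ffunP => i; rewrite !ffunE -big_split; apply: eq_bigr => z _; rewrite ffunE.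
Qed.

Lemma contract_var z : contract (mon_var z) = mon_var (tag z).
Proof.
apply/ffunP => i; rewrite !ffunE (eq_sym i); case: (tag z =P i) => [<-|ne_zi].
  rewrite (bigD1 z) //= ffunE eqxx big1 // => x /andP[_ /negbTE xz].
  by rewrite ffunE xz.
rewrite big1 // => x /eqP xi; rewrite ffunE.
by case: (x =P z) => // xz; case: ne_zi; rewrite -xz.
Qed.

Lemma contract_dvd m w : mdvd m w -> mdvd (contract m) (contract w).
Proof. by move=> /mdvdP le_mw; apply/mdvdP => i; rewrite !contractE; apply: leq_sum. Qed.

Lemma leq_contract m z : m z <= contract m (tag z).
Proof. by rewrite contractE (bigD1 z) //= leq_addr. Qed.

Lemma mdeg_contract m : mdeg (contract m) = mdeg m.
Proof.
rewrite /mdeg (partition_big (fun z : E => tag z) predT) //=.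
by apply: eq_bigr => i _; rewrite contractE.
Qed.

Lemma contract_mexch w x y : 0 < w x ->
  contract (mexch w x y) = mexch (contract w) (tag x) (tag y).
Proof.
move=> wx_gt0; have cwx_gt0 := leq_trans wx_gt0 (leq_contract w x).
apply: (@mon_mulIr 'I_n (mon_var (tag x))).
by rewrite mexch_mulE // -!contract_var -!contract_mul mexch_mulE.
Qed.

Lemma contract_lift w v : mdvd v (contract w) ->
  exists2 w', mdvd w' w & contract w' = v.
Proof.
move=> /mdvdP le_v.
have /fin_all_exists[g g_ok] : forall i, exists g : mon E,
    (forall z, g z <= w z) /\ \sum_(z | tag z == i) g z = v i.
  by move=> i; apply: leq_sum_witness; rewrite -contractE; apply: le_v.
exists [ffun z => g (tag z) z].
  by apply/mdvdP => z; rewrite ffunE; case: (g_ok (tag z)).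
apply/ffunP => i; rewrite contractE -(proj2 (g_ok i)).
by apply: eq_bigr => z /eqP tz; rewrite ffunE tz.
Qed.

Lemma contract_inj_dvd w' w : mdvd w' w -> contract w' = contract w -> w' = w.
Proof. by move=> dvd_w eq_c; apply: mdvd_eq; rewrite // -!mdeg_contract eq_c. Qed.

Lemma contract_gt0 m i : 0 < contract m i -> exists2 z, tag z == i & 0 < m z.
Proof.
by move=> cm_gt0; apply: (ltn_sum_exists (f := fun=> 0)); rewrite big1 // -contractE.
Qed.

Lemma in_PidealP i m : in_mi (Pideal k i) m <-> 0 < contract m i.
Proof.
split=> [/in_miP[_ /mapP[j _ ->] /mdvdP le_m] | /contract_gt0[[i' j] /= /eqP<- m_gt0]].
  set z := Tagged (fun i => 'I_(k i)) j; have := le_m z; rewrite ffunE eqxx => mz_gt0.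
  exact: leq_trans mz_gt0 (leq_contract m z).
apply/in_miP; exists (mon_var (Tagged (fun i => 'I_(k i)) j)).
  by apply/mapP; exists j; rewrite ?mem_enum.
by apply/mdvdP => z; rewrite ffunE; case: eqP => // ->.
Qed.

Lemma in_mi_powP i a m : in_mi (mi_pow (Pideal k i) a) m <-> a <= contract m i.
Proof.
elim: a m => [|a IHa] m; first by split=> // _; apply: in_mi_unit.
rewrite /mi_pow iterS -/(mi_pow _ a) in_mi_mulP.
split=> [[m1 [m2 [/in_PidealP m1_gt0 /IHa le_a /contract_dvd]]] | lt_a].
  by rewrite contract_mul => /mdvdP/(_ i); rewrite ffunE; lia.
have [z /eqP tz mz_gt0] := contract_gt0 (leq_ltn_trans (leq0n a) lt_a).
have [m' def_m] := mon_var_factor mz_gt0.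
have cm : contract m i = (contract m' i).+1.
  by rewrite def_m contract_mul contract_var ffunE [mon_var _ _]ffunE tz eqxx.
exists (mon_var z), m'; split; rewrite -?def_m ?mdvd_refl //.
  by apply/in_PidealP; rewrite contract_var ffunE tz eqxx.
by apply/IHa; rewrite -ltnS -cm.
Qed.

Lemma in_mi_prodP (a : mon 'I_n) (s : seq 'I_n) m : uniq s ->
  in_mi (foldr (fun i J => mi_mul (mi_pow (Pideal k i) (a i)) J) (mi_unit _) s) m <->
  {in s, forall i, a i <= contract m i}.
Proof.
elim: s m => [|i s IHs] m /=; first by split=> // _; apply: in_mi_unit.
case/andP=> i_s uniq_s; rewrite in_mi_mulP.
split=> [[m1 [m2 [/in_mi_powP le_i /(IHs _ uniq_s) le_s /contract_dvd]]] | le_a].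
  rewrite contract_mul => /mdvdP le_m j; rewrite inE => /predU1P[->|j_s].
    apply: leq_trans le_i (leq_trans _ (le_m i)).
    by rewrite [mon_mul _ _ _]ffunE leq_addr.
  apply: leq_trans (le_s j j_s) (leq_trans _ (le_m j)).
  by rewrite [mon_mul _ _ _]ffunE leq_addl.
exists [ffun z => if tag z == i then m z else 0].
exists [ffun z => if tag z == i then 0 else m z]; split.
- apply/in_mi_powP; rewrite contractE (eq_bigr m) -?contractE ?le_a ?mem_head //.
  by move=> z tz; rewrite ffunE tz.
- apply/(IHs _ uniq_s) => j j_s.
  rewrite contractE (eq_bigr m) -?contractE ?le_a ?inE ?j_s ?orbT //.
  by move=> z /eqP tz; rewrite ffunE tz; case: eqP => // eq_ji; rewrite -eq_ji j_s in i_s.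
- by apply/mdvdP => z; rewrite !ffunE; case: ifP; rewrite ?addn0.
Qed.

Lemma in_expansionP I m : in_mi (expansion k I) m <-> in_mi I (contract m).
Proof.
rewrite in_mi_flattenP.
split=> [[a aI /(in_mi_prodP _ _ (enum_uniq _)) le_a] | /in_miP[a aI /mdvdP le_a]].
  by apply/in_miP; exists a => //; apply/mdvdP => i; apply: le_a; rewrite mem_enum.
by exists a => //; apply/(in_mi_prodP _ _ (enum_uniq _)) => i _; apply: le_a.
Qed.

Lemma minGen_expansionP I w : minGen (expansion k I) w <-> minGen I (contract w).
Proof.
split=> [[/in_expansionP wI w_min] | [wI w_min]].
  split=> // v vI /contract_lift[w' dvd_w' def_v]; rewrite -def_v in vI *.
  by rewrite (w_min w') //; apply/in_expansionP.
split=> [|w' /in_expansionP w'I dvd_w']; first exact/in_expansionP.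
by apply: (contract_inj_dvd dvd_w'); apply: w_min w'I (contract_dvd dvd_w').
Qed.

Lemma polymatroidal_expansion I : polymatroidal I -> polymatroidal (expansion k I).
Proof.
case=> eq_deg exch.
split=> [w w' /minGen_expansionP wG /minGen_expansionP w'G | w w' x].
  by rewrite -!mdeg_contract; apply: eq_deg.
move=> /minGen_expansionP wG /minGen_expansionP w'G lt_x.
have wx_gt0 : 0 < w x := leq_ltn_trans (leq0n _) lt_x.
have [lt_tx | ge_tx] := ltnP (contract w' (tag x)) (contract w (tag x)).
  have [j [lt_j exch_j]] := exch _ _ _ wG w'G lt_tx.
  move: lt_j; rewrite !contractE => /ltn_sum_exists[z /eqP tz lt_z].
  by exists z; split=> //; apply/minGen_expansionP; rewrite contract_mexch // tz.
move: ge_tx; rewrite !contractE.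
case/(leq_sum_compensate (P := fun z => tag z == tag x) (eqxx _) lt_x) => z /eqP tz lt_z.
exists z; split=> //; apply/minGen_expansionP.
by rewrite contract_mexch // tz mexch_id // (leq_trans wx_gt0 (leq_contract w x)).
Qed.

Hypothesis k_gt0 : forall i, 0 < k i.

Definition first_var i : E := Tagged (fun i => 'I_(k i)) (Ordinal (k_gt0 i)).

Definition embed u : mon E :=
  [ffun z => if z == first_var (tag z) then u (tag z) else 0].

Lemma contract_embed u : contract (embed u) = u.
Proof.
apply/ffunP => i.
rewrite contractE (bigD1 (first_var i)) //= ffunE eqxx big1 ?addn0 //.
by move=> z /andP[/eqP tz z_first]; rewrite ffunE tz (negbTE z_first).
Qed.

Lemma minGen_embed I u : minGen I u -> minGen (expansion k I) (embed u).
Proof. by rewrite minGen_expansionP contract_embed. Qed.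

Lemma polymatroidal_of_expansion I : polymatroidal (expansion k I) -> polymatroidal I.
Proof.
case=> eq_deg exch; split=> [u v uG vG | u v i uG vG lt_i].
  rewrite -(contract_embed u) -(contract_embed v) !mdeg_contract.
  by apply: eq_deg; apply: minGen_embed.
have lt_first : embed v (first_var i) < embed u (first_var i) by rewrite !ffunE eqxx.
have [z [lt_z /minGen_expansionP exchG]] :=
  exch _ _ _ (minGen_embed uG) (minGen_embed vG) lt_first.
move: lt_z; rewrite !ffunE; case: ifP => // _ lt_z.
exists (tag z); split=> //; rewrite contract_mexch ?contract_embed // in exchG.
by rewrite ffunE eqxx; apply: leq_ltn_trans lt_i.
Qed.

End Expansion.

Theorem theorem1p2 (n : nat) (k : 'I_n -> nat) (hk : forall i, 0 < k i)
    (I : monideal 'I_n) :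
  polymatroidal I <-> polymatroidal (expansion k I).
Proof.
split; [exact: polymatroidal_expansion | exact: (polymatroidal_of_expansion hk)].
Qed.
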